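(* Let $n,m$ be positive integers and let $a^j_i, c^{x,j}_i, c^{y,j}_i, b_j \in \mathbb{R}$ be given for $i\in[n]$, $j\in\{0\}\cup[m]$ (with $b_j$ only for $j\in[m]$). Consider the following two optimization problems in the variables $x,y\in\mathbb{R}^n$, $u\in\mathbb{R}^{2n}$ and $w=(w_{i,k})_{(i,k)\in[2n]\times[2n]}$. McCormick relaxation: $$z_{Mc}:=\min \sum_{i\in[n]} a^0_i w_{i,n+i}+\sum_{i\in[n]}c^{x,0}_i x_i+\sum_{i\in[n]}c^{y,0}_i y_i$$ subject to (C1) $\sum_{i\in[n]} a^j_i w_{i,n+i}+\sum_{i\in[n]}c^{x,j}_i x_i+\sum_{i\in[n]}c^{y,j}_i y_i\ge b_j$ for all $j\in[m]$; (C2) $x_i=u_i$ and $y_i=u_{n+i}$ for all $i\in[n]$; (C3) $u\in[0,1]^{2n}$; (C4) $\max\{0,u_i+u_k-1\}\le w_{i,k}\le \min\{u_i,u_k\}$ for all $(i,k)\in[2n]\times[2n]$. McCormick+SDP relaxation: $$z_{MS}:=\min \sum_{i\in[n]} a^0_i w_{i,n+i}+\sum_{i\in[n]}c^{x,0}_i x_i+\sum_{i\in[n]}c^{y,0}_i y_i$$ subject to (C1)–(C4) and the constraint that the $(2n+1)\times(2n+1)$ matrix $$W:=\begin{bmatrix}1 & u^\top\\ u & w\end{bmatrix}$$ is (symmetric) positive semidefinite. Then either both problems are infeasible, or both are feasible and $z_{Mc}=z_{MS}$.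
   Context: These two problems are relaxations of the quadratically constrained program $\min \sum_i a^0_i x_iy_i+\sum_i c^{x,0}_ix_i+\sum_i c^{y,0}_iy_i$ s.t. $\sum_i a^j_i x_iy_i+\sum_i c^{x,j}_ix_i+\sum_i c^{y,j}_iy_i\ge b_j$ for $j\in[m]$, $x,y\in[0,1]^n$, where $w_{i,k}$ stands for the product $u_iu_k$ with $u=(x,y)$. Here $[n]=\{1,\dots,n\}$. *)

From HB Require Import structures.
From mathcomp Require Import all_boot all_order all_algebra.
From mathcomp Require Import reals.
Set Implicit Arguments. Unset Strict Implicit. Unset Printing Implicit Defensive.
Import Order.TTheory GRing.Theory Num.Theory.
Local Open Scope ring_scope.

Definition psd (R : realType) (k : nat) (M : 'M[R]_k) : Prop :=
  M^T = M /\ forall v : 'cV[R]_k, 0 <= (v^T *m M *m v) 0 0.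

Section Relax.
Variables (R : realType) (n m : nat).
Variables (a0 cx0 cy0 : 'I_n -> R) (a cx cy : 'I_m -> 'I_n -> R) (b : 'I_m -> R).

(* indices: i in [n] is lshift n i (x-part), n+i is rshift n i (y-part) of 'I_(n+n) *)
Definition xpart (u : 'cV[R]_(n + n)) (i : 'I_n) : R := u (lshift n i) 0.
Definition ypart (u : 'cV[R]_(n + n)) (i : 'I_n) : R := u (rshift n i) 0.

Definition objective (x y : 'I_n -> R) (w : 'M[R]_(n + n)) : R :=
  \sum_(i < n) a0 i * w (lshift n i) (rshift n i)
  + \sum_(i < n) cx0 i * x i + \sum_(i < n) cy0 i * y i.

Definition mccormick_feasible (x y : 'I_n -> R) (u : 'cV[R]_(n + n))
    (w : 'M[R]_(n + n)) : Prop :=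
  (forall j : 'I_m,
     \sum_(i < n) a j i * w (lshift n i) (rshift n i)
     + \sum_(i < n) cx j i * x i + \sum_(i < n) cy j i * y i >= b j)
  /\ (forall i : 'I_n, x i = xpart u i /\ y i = ypart u i)
  /\ (forall i : 'I_(n + n), 0 <= u i 0 <= 1)
  /\ (forall i k : 'I_(n + n),
        Num.max 0 (u i 0 + u k 0 - 1) <= w i k <= Num.min (u i 0) (u k 0)).

Definition Wmat (u : 'cV[R]_(n + n)) (w : 'M[R]_(n + n)) : 'M[R]_(1 + (n + n)) :=
  block_mx (1%:M : 'M[R]_1) u^T u w.

Definition mcsdp_feasible (x y : 'I_n -> R) (u : 'cV[R]_(n + n))
    (w : 'M[R]_(n + n)) : Prop :=
  mccormick_feasible x y u w /\ psd (Wmat u w).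

Definition is_min_value
    (F : ('I_n -> R) -> ('I_n -> R) -> 'cV[R]_(n + n) -> 'M[R]_(n + n) -> Prop)
    (z : R) : Prop :=
  (exists x y u w, F x y u w /\ objective x y w = z)
  /\ (forall x y u w, F x y u w -> z <= objective x y w).

Definition feasible
    (F : ('I_n -> R) -> ('I_n -> R) -> 'cV[R]_(n + n) -> 'M[R]_(n + n) -> Prop) : Prop :=
  exists x y u w, F x y u w.
End Relax.

(* Every McCormick-feasible point lifts to a McCormick+SDP-feasible point with
   the same objective value: keep u and the pair entries t_i = w_(i,n+i), and
   put u_p on the diagonal and u_p u_q on all other entries.  Then
   W - (1,u)(1,u)^T is a direct sum of the 2x2 blocks
   [x - x^2, t - x y; t - x y, y - y^2], which are positive semidefinite
   because the McCormick inequalities give (t - x y)^2 <= x (1 - x) y (1 - y).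
   As the SDP problem only adds a constraint, the two problems are feasible
   together and share their infimum, which is attained because the McCormick
   problem only depends on (u, t), and these range over a compact set. *)

From HB Require Import structures.
From mathcomp Require Import all_boot all_order all_algebra.
From mathcomp Require Import reals ring lra.
From mathcomp Require Import boolp classical_sets topology normedtype derive.
Set Implicit Arguments. Unset Strict Implicit. Unset Printing Implicit Defensive.
Import Order.TTheory GRing.Theory Num.Theory.
Import numFieldNormedType.Exports.
Local Open Scope classical_set_scope.
Local Open Scope ring_scope.

Lemma quad2_ge0 (R : realFieldType) (A B C z1 z2 : R) :
  0 <= A -> 0 <= B -> C * C <= A * B ->
  0 <= A * z1 * z1 + 2 * C * z1 * z2 + B * z2 * z2.
Proof.
move=> A0 B0 CAB; have [A00|Apos] := eqVneq A 0.
  rewrite A00 mul0r in CAB *.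
  have -> : C = 0 by apply/eqP; rewrite -sqrf_eq0 eq_le sqr_ge0 andbT expr2.
  nra.
have Ap : 0 < A by rewrite lt_def Apos A0.
rewrite -(pmulr_rge0 _ Ap).
have -> : A * (A * z1 * z1 + 2 * C * z1 * z2 + B * z2 * z2) =
    (A * z1 + C * z2) ^+ 2 + (A * B - C * C) * z2 ^+ 2 by ring.
by apply: addr_ge0; [exact: sqr_ge0 | apply: mulr_ge0; [lra | exact: sqr_ge0]].
Qed.

Lemma psd_block_schur (R : realType) k (u : 'cV[R]_k) (w : 'M[R]_k) :
  psd (w - u *m u^T) -> psd (block_mx (1%:M : 'M[R]_1) u^T u w).
Proof.
move=> [sym qform]; split.
  have wT : w^T = w.
    by move: sym; rewrite linearB /= trmx_mul trmxK => /addIr.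
  by rewrite tr_block_mx trmxK tr_scalar_mx wT.
move=> v; rewrite -(vsubmxK v) tr_col_mx mul_row_block mul_row_col.
rewrite mulmx1 !mulmxDl.
set s := usubmx v; set r := dsubmx v.
have hw : r^T *m w *m r = r^T *m (w - u *m u^T) *m r + r^T *m u *m (u^T *m r).
  by rewrite mulmxBr mulmxBl !mulmxA subrK.
have CT : r^T *m u = (u^T *m r)^T by rewrite trmx_mul trmxK.
rewrite hw CT; set Q := r^T *m _ *m r; set C := u^T *m r.
have m11 (A B : 'M[R]_1) : (A *m B) 0 0 = A 0 0 * B 0 0 by rewrite mxE big_ord1.
have d11 (A B : 'M[R]_1) : (A + B) 0 0 = A 0 0 + B 0 0 by rewrite mxE.
have t11 (A : 'M[R]_1) : A^T 0 0 = A 0 0 by rewrite mxE.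
rewrite -[s^T *m _ *m r]mulmxA -/C !d11 !m11 !t11.
have := qform r; rewrite -/Q => Q0.
have := sqr_ge0 (s 0 0 + C 0 0); rewrite expr2 => sq0.
nra.
Qed.

Lemma quad_formE (R : realType) k (M : 'M[R]_k) (v : 'cV[R]_k) :
  (v^T *m M *m v) 0 0 = \sum_p \sum_q v p 0 * M p q * v q 0.
Proof.
rewrite mxE; under eq_bigr do rewrite mxE big_distrl.
rewrite exchange_big; apply: eq_bigr => p _; apply: eq_bigr => q _.
by rewrite !mxE.
Qed.

Definition mccormick (R : realType) (x y t : R) : bool :=
  Num.max 0 (x + y - 1) <= t <= Num.min x y.

Section McCormick.
Variable R : realType.
Implicit Types x y t : R.

Lemma mccormickP x y t :
  mccormick x y t = [&& 0 <= t, x + y - 1 <= t, t <= x & t <= y].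
Proof. by rewrite /mccormick ge_max le_min !andbA. Qed.

Lemma mccormickC x y t : mccormick x y t = mccormick y x t.
Proof. by rewrite /mccormick [x + y]addrC minC. Qed.

Lemma mccormick_diag x : 0 <= x <= 1 -> mccormick x x x.
Proof. by move=> /andP[x0 x1]; rewrite mccormickP; apply/and4P; split; lra. Qed.

Lemma mccormick_mul x y : 0 <= x <= 1 -> 0 <= y <= 1 -> mccormick x y (x * y).
Proof.
move=> /andP[x0 x1] /andP[y0 y1]; rewrite mccormickP.
by apply/and4P; split; nra.
Qed.

Lemma mccormick_cov_bound x y t : 0 <= x <= 1 -> 0 <= y <= 1 ->
  mccormick x y t -> (t - x * y) * (t - x * y) <= (x - x * x) * (y - y * y).
Proof.
move=> /andP[x0 x1] /andP[y0 y1] /[!mccormickP] /and4P[t0 t1 t2 t3].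
have xy0 : 0 <= x * y by nra.
case: (lerP (x * y) t) => h.
- have h1 : t - x * y <= x * (1 - y) by lra.
  have h2 : t - x * y <= y * (1 - x) by lra.
  have h4 : 0 <= x * (1 - y) by nra.
  nra.
- have h1 : x * y - t <= x * y by lra.
  have h2 : x * y - t <= (1 - x) * (1 - y) by lra.
  nra.
Qed.

End McCormick.

Section Lift.
Variables (R : realType) (n : nat).
Implicit Types (p q : 'I_(n + n)) (u : 'cV[R]_(n + n)) (t : 'I_n -> R).

Definition partner p : 'I_(n + n) :=
  match split p with inl i => rshift n i | inr i => lshift n i end.
Definition pair_idx p : 'I_n := match split p with inl i | inr i => i end.

Lemma partnerL i : partner (lshift n i) = rshift n i.
Proof. by rewrite /partner (unsplitK (inl _ i)). Qed.
Lemma partnerR i : partner (rshift n i) = lshift n i.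
Proof. by rewrite /partner (unsplitK (inr _ i)). Qed.
Lemma pair_idxL i : pair_idx (lshift n i) = i.
Proof. by rewrite /pair_idx (unsplitK (inl _ i)). Qed.
Lemma pair_idxR i : pair_idx (rshift n i) = i.
Proof. by rewrite /pair_idx (unsplitK (inr _ i)). Qed.

Lemma partnerK : involutive partner.
Proof.
by move=> p; rewrite -(splitK p); case: (split p) => i /=; rewrite ?(partnerL, partnerR).
Qed.

Lemma pair_idx_partner p : pair_idx (partner p) = pair_idx p.
Proof.
rewrite -(splitK p); case: (split p) => i /=;
  by rewrite ?(partnerL, partnerR, pair_idxL, pair_idxR).
Qed.

Lemma partner_neq p : partner p != p.
Proof.
by rewrite -(splitK p); case: (split p) => i /=; rewrite ?partnerL ?partnerR eq_shift.
Qed.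

Lemma eq_partner p q : (q == partner p) = (p == partner q).
Proof. by apply/eqP/eqP => ->; rewrite partnerK. Qed.

Definition mc_lift u t : 'M[R]_(n + n) :=
  \matrix_(p, q) if p == q then u p 0
                 else if q == partner p then t (pair_idx p) else u p 0 * u q 0.

Lemma mc_lift_pair u t i : mc_lift u t (lshift n i) (rshift n i) = t i.
Proof. by rewrite mxE eq_shift partnerL eqxx pair_idxL. Qed.

Lemma mc_lift_tr u t : (mc_lift u t)^T = mc_lift u t.
Proof.
apply/matrixP => p q; rewrite !mxE eq_sym.
case: eqVneq => [->//|_]; rewrite eq_partner.
by case: eqVneq => [->|_]; rewrite ?pair_idx_partner // mulrC.
Qed.

Section Bounds.
Variables (u : 'cV[R]_(n + n)) (t : 'I_n -> R).
Hypothesis u01 : forall p, 0 <= u p 0 <= 1.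
Hypothesis t_mc : forall i, mccormick (u (lshift n i) 0) (u (rshift n i) 0) (t i).

Lemma mc_lift_mccormick p q : mccormick (u p 0) (u q 0) (mc_lift u t p q).
Proof.
rewrite mxE; case: eqVneq => [<-|_]; first exact: mccormick_diag.
case: eqVneq => [->|_]; last exact: mccormick_mul.
rewrite -(splitK p); case: (split p) => i /=.
  by rewrite partnerL pair_idxL.
by rewrite partnerR pair_idxR mccormickC.
Qed.

Lemma mc_lift_psd : psd (Wmat u (mc_lift u t)).
Proof.
apply: psd_block_schur; split.
  by rewrite linearB /= mc_lift_tr trmx_mul trmxK.
move=> v; rewrite quad_formE.
have row_sum p : \sum_q v p 0 * (mc_lift u t - u *m u^T) p q * v q 0 =
    v p 0 * (u p 0 - u p 0 * u p 0) * v p 0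
    + v p 0 * (t (pair_idx p) - u p 0 * u (partner p) 0) * v (partner p) 0.
  have DE q : (mc_lift u t - u *m u^T) p q = mc_lift u t p q - u p 0 * u q 0.
    by rewrite !mxE big_ord1 mxE.
  rewrite (bigD1 p) // (bigD1 (partner p)) /=; last exact: partner_neq.
  rewrite big1 ?addr0 => [|q /andP[qp qpp]].
    by rewrite !DE !mxE eqxx eq_sym (negbTE (partner_neq p)) eqxx.
  by rewrite DE mxE eq_sym (negbTE qp) (negbTE qpp) subrr mulr0 mul0r.
rewrite (eq_bigr _ (fun p _ => row_sum p)) big_split_ord /= -big_split.
apply: sumr_ge0 => i _; rewrite partnerL partnerR pair_idxL pair_idxR.
have cov := mccormick_cov_bound (u01 _) (u01 _) (t_mc i).
have /andP[x0 x1] := u01 (lshift n i); have /andP[y0 y1] := u01 (rshift n i).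
have A0 : 0 <= u (lshift n i) 0 - u (lshift n i) 0 * u (lshift n i) 0 by nra.
have B0 : 0 <= u (rshift n i) 0 - u (rshift n i) 0 * u (rshift n i) 0 by nra.
have := quad2_ge0 (v (lshift n i) 0) (v (rshift n i) 0) A0 B0 cov.
rewrite /=; lra.
Qed.

End Bounds.
End Lift.

Section Reduction.
Variables (R : realType) (n m : nat).
Variables (a cx cy : 'I_m -> 'I_n -> R) (b : 'I_m -> R).

Definition pairs (w : 'M[R]_(n + n)) (i : 'I_n) : R := w (lshift n i) (rshift n i).

Definition pair_form (p q r : 'I_n -> R) (u : 'cV[R]_(n + n)) (t : 'I_n -> R) : R :=
  \sum_i p i * t i + \sum_i q i * xpart u i + \sum_i r i * ypart u i.

Lemma objective_pairs p q r x y u w :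
  (forall i, x i = xpart u i /\ y i = ypart u i) ->
  objective p q r x y w = pair_form p q r u (pairs w).
Proof.
move=> xy; rewrite /objective /pair_form.
by congr (_ + _ + _); apply: eq_bigr => i _; case: (xy i) => xi yi; rewrite ?xi ?yi.
Qed.

Lemma objective_lift p q r u t :
  objective p q r (xpart u) (ypart u) (mc_lift u t) = pair_form p q r u t.
Proof. by rewrite /objective /pair_form; under eq_bigr do rewrite mc_lift_pair. Qed.

Definition mc_reduced (u : 'cV[R]_(n + n)) (t : 'I_n -> R) : Prop :=
  (forall p, 0 <= u p 0 <= 1)
  /\ (forall i, mccormick (xpart u i) (ypart u i) (t i))
  /\ (forall j, b j <= pair_form (a j) (cx j) (cy j) u t).

Lemma mccormick_reduced x y u w :
  mccormick_feasible a cx cy b x y u w -> mc_reduced u (pairs w).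
Proof.
move=> [C1 [C2 [C3 C4]]]; split; first exact: C3.
split=> [i|j]; first exact: C4.
by rewrite -(objective_pairs _ _ _ w C2); exact: C1.
Qed.

Lemma reduced_mcsdp u t :
  mc_reduced u t -> mcsdp_feasible a cx cy b (xpart u) (ypart u) u (mc_lift u t).
Proof.
move=> [u01 [t_mc lin]]; split; last exact: mc_lift_psd.
split=> [j|]; first by have := lin j; rewrite -objective_lift.
by split=> //; split=> //; exact: mc_lift_mccormick.
Qed.

End Reduction.

Section RealValued.
Variables (R : realType) (T : topologicalType).
Implicit Types f g h : T -> R.

Lemma closed_le f g : continuous f -> continuous g -> closed [set x | f x <= g x].
Proof.
move=> cf cg; have -> : [set x | f x <= g x] = (fun x => g x - f x) @^-1` [set r | 0 <= r].
  by apply/seteqP; split => x /=; rewrite subr_ge0.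
by apply: preimage_closed; [move=> x _; exact: (continuousB (cg x) (cf x)) | exact: closed_ge].
Qed.

Lemma closed_le2 f g h : continuous f -> continuous g -> continuous h ->
  closed [set x | f x <= g x <= h x].
Proof.
move=> cf cg ch; have -> : [set x | f x <= g x <= h x] =
    [set x | f x <= g x] `&` [set x | g x <= h x].
  by apply/seteqP; split => x /= => [/andP//|[-> ->]].
by apply: closedI; exact: closed_le.
Qed.

Lemma closed_forall (I : Type) (P : I -> set T) :
  (forall i, closed (P i)) -> closed [set x | forall i, P i x].
Proof.
move=> cP; have -> : [set x | forall i, P i x] = \bigcap_(i in setT) P i.
  by apply/seteqP; split => x /= Px i //; exact: Px.
by apply: closed_bigI => i _.
Qed.

Lemma continuous_add f g : continuous f -> continuous g ->
  continuous (fun x => f x + g x).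
Proof. by move=> cf cg x; exact: (continuousD (cf x) (cg x)). Qed.

Lemma continuous_mull (c : R) f : continuous f -> continuous (fun x => c * f x).
Proof. by move=> cf x; apply: continuousM; [exact: cst_continuous | exact: cf]. Qed.

Lemma continuous_sum (I : Type) (s : seq I) (F : I -> T -> R) :
  (forall i, continuous (F i)) -> continuous (fun x => \sum_(i <- s) F i x).
Proof. by move=> cF; apply: continuous_big => [|i _]; [exact: add_continuous | exact: cF]. Qed.

End RealValued.

Section Compactness.
Variables (R : realType) (n m : nat).
Variables (a cx cy : 'I_m -> 'I_n -> R) (b : 'I_m -> R).
Local Notation V := 'rV[R]_((n + n) + n).

Definition uof (v : V) : 'cV[R]_(n + n) := (lsubmx v)^T.
Definition tof (v : V) (i : 'I_n) : R := rsubmx v 0 i.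
Definition encode (u : 'cV[R]_(n + n)) (t : 'I_n -> R) : V := row_mx u^T (\row_i t i).

Lemma uof_encode u t : uof (encode u t) = u.
Proof. by rewrite /uof /encode row_mxKl trmxK. Qed.

Lemma tof_encode u t : tof (encode u t) = t.
Proof. by apply/funext => i; rewrite /tof /encode row_mxKr mxE. Qed.

Lemma uof_continuous p : continuous (fun v => uof v p 0).
Proof.
have -> : (fun v => uof v p 0) = fun v : V => v 0 (lshift n p).
  by apply/funext => v; rewrite !mxE.
exact: coord_continuous.
Qed.

Lemma tof_continuous i : continuous (fun v => tof v i).
Proof.
have -> : (fun v => tof v i) = fun v : V => v 0 (rshift (n + n) i).
  by apply/funext => v; rewrite /tof mxE.
exact: coord_continuous.
Qed.

Lemma pair_form_continuous p q r : continuous (fun v => pair_form p q r (uof v) (tof v)).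
Proof.
apply: continuous_add; first apply: continuous_add.
all: apply: continuous_sum => i; apply: continuous_mull.
- exact: tof_continuous.
- by rewrite /xpart; exact: uof_continuous.
- by rewrite /ypart; exact: uof_continuous.
Qed.

Definition mc_set : set V := [set v | mc_reduced a cx cy b (uof v) (tof v)].

Lemma mc_set_closed : closed mc_set.
Proof.
apply: closedI; last apply: closedI.
- apply: closed_forall => p.
  apply: closed_le2; last exact: cst_continuous.
  + exact: cst_continuous.
  + exact: uof_continuous.
- apply: closed_forall => i.
  apply: closed_le2; last 2 first.
  + exact: tof_continuous.
  + by apply: min_fun_continuous; exact: uof_continuous.
  apply: max_fun_continuous; first exact: cst_continuous.
  apply: continuous_add; last exact: cst_continuous.
  by apply: continuous_add; exact: uof_continuous.
- apply: closed_forall => j.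
  by apply: closed_le; [exact: cst_continuous | exact: pair_form_continuous].
Qed.

Lemma mc_set_compact : compact mc_set.
Proof.
apply: (subclosed_compact mc_set_closed (rV_compact (fun=> @segment_compact R 0 1))).
move=> v [u01 [t_mc _]] k /=; rewrite in_itv /= -(splitK k).
case: (split k) => [p|i] /=.
  by have := u01 p; rewrite !mxE.
have := t_mc i; rewrite mccormickP => /and4P[t0 _ tx _].
have /andP[_ x1] := u01 (lshift n i).
have -> : v 0 (rshift (n + n) i) = tof v i by rewrite /tof mxE.
by rewrite t0 (le_trans tx x1).
Qed.

End Compactness.

Lemma mcsdp_attains_mccormick_min (R : realType) (n m : nat)
    (a0 cx0 cy0 : 'I_n -> R) (a cx cy : 'I_m -> 'I_n -> R) (b : 'I_m -> R) :
  feasible (mccormick_feasible a cx cy b) ->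
  exists x y u w, mcsdp_feasible a cx cy b x y u w /\
    forall x' y' u' w', mccormick_feasible a cx cy b x' y' u' w' ->
      objective a0 cx0 cy0 x y w <= objective a0 cx0 cy0 x' y' w'.
Proof.
move=> [x0 [y0 [u0 [w0 F0]]]].
have encode_mc x y u w : mccormick_feasible a cx cy b x y u w ->
    mc_set a cx cy b (encode u (pairs w)).
  by move=> F; rewrite /mc_set /= uof_encode tof_encode; exact: mccormick_reduced F.
have [c /[!inE] c_mc c_min] := compact_EVT_min (ex_intro _ _ (encode_mc _ _ _ _ F0))
  (@mc_set_compact R n m a cx cy b)
  (continuous_subspaceT (pair_form_continuous (p:=a0) (q:=cx0) (r:=cy0))).
exists (xpart (uof c)), (ypart (uof c)), (uof c), (mc_lift (uof c) (tof c)).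
split=> [|x y u w F]; first exact: reduced_mcsdp.
rewrite objective_lift (objective_pairs _ _ _ _ F.2.1).
have := c_min _ (mem_set (encode_mc _ _ _ _ F)).
by rewrite uof_encode tof_encode.
Qed.

Theorem mainTheorem1 (R : realType) (n m : nat) (hn : (0 < n)%N) (hm : (0 < m)%N)
    (a0 cx0 cy0 : 'I_n -> R) (a cx cy : 'I_m -> 'I_n -> R) (b : 'I_m -> R) :
  (~ feasible (mccormick_feasible a cx cy b)
   /\ ~ feasible (mcsdp_feasible a cx cy b))
  \/
  (feasible (mccormick_feasible a cx cy b)
   /\ feasible (mcsdp_feasible a cx cy b)
   /\ exists z : R,
        is_min_value a0 cx0 cy0 (mccormick_feasible a cx cy b) z
        /\ is_min_value a0 cx0 cy0 (mcsdp_feasible a cx cy b) z).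
Proof.
have [Fmc|nFmc] := pselect (feasible (mccormick_feasible a cx cy b)); last first.
  by left; split=> // -[x [y [u [w [F _]]]]]; apply: nFmc; exists x, y, u, w.
have [x [y [u [w [F Fmin]]]]] := mcsdp_attains_mccormick_min a0 cx0 cy0 Fmc.
right; split=> //; split; first by exists x, y, u, w.
exists (objective a0 cx0 cy0 x y w); split; split.
- by exists x, y, u, w; split=> //; exact: F.1.
- exact: Fmin.
- by exists x, y, u, w.
- by move=> x' y' u' w' [F' _]; apply: Fmin F'.
Qed.
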